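(* Let $X$ be a compact scattered space with countable scattered height. Suppose that to each $x\in X$ one can assign a clopen neighborhood $U_x$ of $x$ such that $U_x\cap X^{(h(x))}=\{x\}$ and $\{U_x:x\in X\}$ is point-countable. If $X$ has a $P$-base for some directed set $P$ with calibre $(\omega_1,\omega)$, then $X$ is countable, hence metrizable.
   Context: All spaces are Tychonoff. $X$ is scattered if every nonempty subspace has an isolated point; for $A\subseteq X$ let $A'$ be the set of non-isolated points of $A$, set $X^{(0)}=X$, $X^{(\alpha)}=\bigcap_{\beta<\alpha}(X^{(\beta)})'$ for $\alpha>0$; for $x\in X$, $h(x)$ is the ordinal with $x\in X^{(h(x))}\setminus X^{(h(x)+1)}$, and the scattered height is $h(X)=\sup\{h(x):x\in X\}$. A family is point-countable if each point lies in only countably many members. A $P$-base is an assignment to each $x\in X$ of a neighborhood base $\{U_p:p\in P\}$ at $x$ with $U_p\subseteq U_{p'}$ whenever $p\ge p'$. A directed set has calibre $(\omega_1,\omega)$ if every uncountable subset contains an infinite subset with an upper bound. *)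

From HB Require Import structures.
From mathcomp Require Import all_boot all_order all_algebra.
From mathcomp Require Import all_classical all_reals all_analysis.
From mathcomp Require Import Rstruct Rstruct_topology.

Set Implicit Arguments.
Unset Strict Implicit.
Unset Printing Implicit Defensive.

Import Order.TTheory GRing.Theory Num.Theory.
Local Open Scope classical_set_scope.
Local Open Scope ring_scope.

Definition tychonoff_space (X : topologicalType) : Prop :=
  completely_regular_space X /\ accessible_space X.

Definition derived {X : topologicalType} (A : set X) : set X :=
  A `&` limit_point A.

Definition scattered (X : topologicalType) : Prop :=
  forall A : set X, A !=set0 -> exists2 x, A x & ~ limit_point A x.

Definition well_order {W : Type} (lt : W -> W -> Prop) : Prop :=
  [/\ well_founded lt,
      (forall a b c, lt a b -> lt b c -> lt a c)
    & (forall a b, a = b \/ lt a b \/ lt b a)].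

(* Cantor-Bendixson derivatives indexed by a well-founded relation:
   X^(a) = \bigcap_{b < a} (X^(b))'   (the empty intersection being X). *)
Definition CB_level {X : topologicalType} {W : Type} (lt : W -> W -> Prop)
  (wf : well_founded lt) : W -> set X :=
  Fix wf (fun _ => set X)
    (fun a rec => [set x : X | forall b (h : lt b a), derived (rec b h) x]).

Arguments CB_level {X W} lt wf _ _.

(* x has scattered height a (i.e. h(x) = a): x \in X^(a) \ X^(a+1),
   where X^(a+1) = (X^(a))'. *)
Definition has_height {X : topologicalType} {W : Type} (lt : W -> W -> Prop)
  (wf : well_founded lt) (x : X) (a : W) : Prop :=
  CB_level lt wf a x /\ ~ derived (CB_level lt wf a) x.

Arguments has_height {X W} lt wf x a.

Definition point_countable {X I : Type} (F : I -> set X) : Prop :=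
  forall y : X, countable [set i | F i y].

Definition directed {P : Type} (le : P -> P -> Prop) : Prop :=
  [/\ (forall p, le p p),
      (forall p q r, le p q -> le q r -> le p r)
    & (forall p q, exists r, le p r /\ le q r)].

Definition calibre_w1_w {P : Type} (le : P -> P -> Prop) : Prop :=
  forall A : set P, ~ countable A ->
    exists B : set P, [/\ B `<=` A, infinite_set B & exists u, forall b, B b -> le b u].

Definition P_base {X : topologicalType} {P : Type} (le : P -> P -> Prop)
  (U : X -> P -> set X) : Prop :=
  forall x : X,
    [/\ (forall p, nbhs x (U x p)),
        (forall V, nbhs x V -> exists p, U x p `<=` V)
      & (forall p p', le p' p -> U x p `<=` U x p')].

Definition has_P_base {X : topologicalType} {P : Type} (le : P -> P -> Prop) : Prop :=
  exists U : X -> P -> set X, P_base le U.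

Definition metrizable (X : topologicalType) : Prop :=
  exists d : X -> X -> Rdefinitions.R,
    [/\ (forall x y, 0 <= d x y),
        (forall x y, d x y = 0 <-> x = y),
        (forall x y, d x y = d y x),
        (forall x y z, d x z <= d x y + d y z)
      & (forall x (A : set X), nbhs x A <-> exists2 e, 0 < e & [set y | d x y < e] `<=` A)].

From HB Require Import structures.
From mathcomp Require Import all_boot all_order all_algebra.
From mathcomp Require Import all_classical all_reals all_analysis finmap.
From mathcomp Require Import Rstruct.
From Stdlib Require Import Relation_Operators Operators_Properties.

Set Implicit Arguments.
Unset Strict Implicit.
Unset Printing Implicit Defensive.

Import Order.TTheory GRing.Theory Num.Theory.
Local Open Scope classical_set_scope.

(* Countability: by compactness it suffices that every point has a countable open
   neighbourhood, which we prove by induction on the height.  Let y have height b.  Every z in U_y \ {y} has height < b, since U_y meets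
   X^(b) only in y, so it has a countable open neighbourhood V_z contained in U_z.  As
   {U_z} is point-countable, the equivalence generated by "V_s meets V_w" has countable
   classes; if U_y \ {y} were uncountable, a transversal E of these classes would be
   uncountable.  Each V_z contains at most one point of E, so by compactness every
   neighbourhood of y contains all but finitely many points of E.  Choose p_e with
   e outside U(y, p_e); the p_e form an uncountable set, so by calibre (omega_1, omega)
   infinitely many of them lie below a single u, and U(y, u) misses infinitely many
   points of E, a contradiction.

   Metrizability: the countably many clopen sets U_x separate points, and in a compact
   space the ultrametric d(x, z) = 1/(k+1), where k is the first index of a set of the
   family containing exactly one of x and z, induces the topology. *)

Definition locally_countable {X : topologicalType} (z : X) : Prop :=
  exists O : set X, [/\ open O, O z & countable O].

Section CompactCovers.
Variable X : topologicalType.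
Hypothesis cX : compact [set: X].

Lemma compact_finite_open_cover (N : X -> set X) :
  (forall z, open (N z) /\ N z z) ->
  exists D : {fset X}, forall x, exists2 z, z \in D & N z x.
Proof.
move=> oN.
have [[x0 _]|X0] := pselect (exists x : X, True); last first.
  by exists fset0 => x; case: X0; exists x.
(* [compact_cover] is stated for pointed spaces only *)
pose Xp : ptopologicalType :=
  HB.pack (X : Type) (Topological.class X) (isPointed.Build X x0).
have : cover_compact [set: Xp] by rewrite -compact_cover.
move=> /(_ X setT N (fun z _ => (oN z).1)) [|D _ DN].
  by move=> x _; exists x => //; exact: (oN x).2.
by exists D => x; have [z /= zD Nzx] := DN x I; exists z.
Qed.

Lemma compact_countable_of_locally_countable :
  (forall z : X, locally_countable z) -> countable [set: X].
Proof.
move=> /choice[N HN].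
have [|D DN] := @compact_finite_open_cover N; first by move=> z; case: (HN z).
apply: (@sub_countable _ _ _ (\bigcup_(z in [set` D]) N z)).
  by apply: subset_card_le => x _; have [z zD Nzx] := DN x; exists z.
apply: bigcup_countable => [|z _]; last by case: (HN z).
exact/finite_set_countable/finite_fset.
Qed.

Lemma compact_finite_of_locally_subsingleton (A : set X) :
  (forall z, exists O, [/\ open O, O z & forall a c, A a -> A c -> O a -> O c -> a = c]) ->
  finite_set A.
Proof.
move=> /choice[N HN].
have [|D DN] := @compact_finite_open_cover N; first by move=> z; case: (HN z).
apply: (@sub_finite_set _ _ (\bigcup_(z in [set` D]) (N z `&` A))).
  by move=> x Ax; have [z zD Nzx] := DN x; exists z.
apply: bigcup_finite => [|z _]; first exact: finite_fset.
have [_ _ N1] := HN z.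
have [[a [Na Aa]]|NA0] := pselect (N z `&` A !=set0).
  apply: (@sub_finite_set _ _ [set a]); last exact: finite_set1.
  by move=> c [Nc Ac]; exact: N1.
by apply: (@sub_finite_set _ _ set0) => // c Hc; apply: NA0; exists c.
Qed.

Lemma compact_finite_outside_nbhs (y : X) (A N : set X) : nbhs y N ->
  (forall z, z <> y ->
     exists O, [/\ open O, O z & forall a c, A a -> A c -> O a -> O c -> a = c]) ->
  finite_set (A `\` N).
Proof.
move=> Ny Aloc; apply: compact_finite_of_locally_subsingleton => z.
have [->|zy] := pselect (z = y).
  move: Ny; rewrite nbhsE => -[B [oB By] BN].
  by exists B; split => // a c [_ /(_ (BN a _))].
have [B [oB Bz B1]] := Aloc z zy.
by exists B; split => // a c [Aa _] [Ac _]; exact: B1.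
Qed.

End CompactCovers.

Section Heights.
Variables (X : topologicalType) (W : Type) (lt : W -> W -> Prop) (wf : well_founded lt).

Lemma CB_levelE a : CB_level lt wf a =
  [set x : X | forall b (h : lt b a), derived (CB_level lt wf b) x].
Proof.
rewrite /CB_level Fix_eq // => a' f g fg.
by congr (fun F => [set x | forall b (h : lt b a'), derived (F b h) x]);
  apply: functional_extensionality_dep => b; apply: functional_extensionality_dep.
Qed.

Lemma CB_level_antitone a b : lt b a -> CB_level lt wf a `<=` CB_level (X:=X) lt wf b.
Proof. by move=> ltba x; rewrite CB_levelE => /(_ b ltba) []. Qed.

Variable U : X -> set X.
Hypothesis U_self : forall x, U x x.
Hypothesis U_level : forall x a, has_height lt wf x a -> U x `&` CB_level lt wf a = [set x].

Lemma notin_U_of_level (x : X) a z :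
  has_height lt wf x a -> CB_level lt wf a z -> z <> x -> ~ U x z.
Proof.
by move=> hx CBz zx Uxz; have : (U x `&` CB_level lt wf a) z by []; rewrite U_level.
Qed.

Hypothesis lt_total : forall a b : W, a = b \/ lt a b \/ lt b a.

Lemma CB_level_of_height_nlt (z : X) c a :
  has_height lt wf z c -> ~ lt c a -> CB_level lt wf a z.
Proof.
move=> [CBz _] nltca; have [eac|[ltac|//]] := lt_total a c; first by rewrite eac.
exact: CB_level_antitone ltac _ CBz.
Qed.

Lemma U_height_lt (x : X) b z a : has_height lt wf x b -> U x z -> z <> x ->
  has_height lt wf z a -> lt a b.
Proof.
move=> hx Uxz zx hz; apply: contrapT => nltab.
exact: notin_U_of_level hx (CB_level_of_height_nlt hz nltab) zx Uxz.
Qed.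

Lemma U_separates : (forall w : X, exists a, has_height lt wf w a) ->
  forall x z : X, x <> z -> exists w, ~ (U w x <-> U w z).
Proof.
move=> hgt x z xz; have [a hx] := hgt x; have [c hz] := hgt z.
have [ltca|nltca] := pselect (lt c a).
  have CBx := CB_level_antitone ltca hx.1.
  by exists z => -[_ /(_ (U_self z))]; exact: notin_U_of_level hz CBx xz.
have CBz := CB_level_of_height_nlt hz nltca.
by exists x => -[/(_ (U_self x)) Uxz _]; exact: notin_U_of_level hx CBz (nesym xz) Uxz.
Qed.

End Heights.

Section Chains.
Variables (I : choiceType) (T : Type) (V : I -> set T).

Definition overlap (i j : I) : Prop := V i `&` V j !=set0.

Definition chained : I -> I -> Prop := clos_refl_trans I overlap.

Lemma chained_sym i j : chained i j -> chained j i.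
Proof.
elim=> [{}i {}j [t [Vit Vjt]]|{}i|i' j' k' _ IHij _ IHjk].
- by apply: rt_step; exists t.
- exact: rt_refl.
- exact: rt_trans IHjk IHij.
Qed.

Fixpoint chained_within (n : nat) (i : I) : set I :=
  if n is n'.+1 then [set j | exists2 s, chained_within n' i s & overlap s j] else [set i].

Lemma chained_withinP i j : chained i j <-> exists n, chained_within n i j.
Proof.
split=> [ij|[n]].
  elim: (clos_rt_rtn1 _ _ _ _ ij) => [|s k sk _ [n ijn]]; first by exists 0%N.
  by exists n.+1; exists s.
elim: n j => [j /= <-|n IH k [s ijs sk]]; first exact: rt_refl.
exact: rt_trans (IH s ijs) (rt_step _ _ _ _ sk).
Qed.

Hypothesis V_countable : forall i, countable (V i).
Hypothesis V_point_countable : point_countable V.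

Lemma chained_within_countable n i : countable (chained_within n i).
Proof.
elim: n => [|n IH] /=; first exact: countable1.
apply: (@sub_countable _ _ _
  (\bigcup_(s in chained_within n i) \bigcup_(t in V s) [set j | V j t])).
  by apply: subset_card_le => j [s ijs [t [Vst Vjt]]]; exists s => //; exists t.
by apply: bigcup_countable => // s _; apply: bigcup_countable.
Qed.

Lemma chained_countable i : countable (chained i).
Proof.
apply: (@sub_countable _ _ _ (\bigcup_(n in [set: nat]) chained_within n i)).
  by apply: subset_card_le => j /chained_withinP[n ijn]; exists n.
by apply: bigcup_countable => // n _; exact: chained_within_countable.
Qed.

Lemma exists_chain_transversal (A : set I) : ~ countable A ->
  exists E, [/\ E `<=` A, ~ countable E & forall a c, E a -> E c -> chained a c -> a = c].
Proof.
move=> A_unc; have [a0 _] : A !=set0.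
  by apply/set0P/negP => /eqP A0; apply: A_unc; rewrite A0.
pose rep i := xget a0 [set j | A j /\ chained i j].
have repP a : A a -> A (rep a) /\ chained a (rep a).
  move=> Aa; apply: (@xgetI _ a0 [set j | A j /\ chained a j] a).
  by split => //; exact: rt_refl.
have rep_eq a c : chained a c -> rep a = rep c.
  move=> ac; congr (xget a0 _); apply/seteqP; split=> j [Aj ?]; split => //.
    exact: rt_trans (chained_sym ac) _.
  exact: rt_trans ac _.
exists [set e | A e /\ rep e = e]; split.
- by move=> e [].
- move=> E_cnt; apply: A_unc.
  apply: (@sub_countable _ _ _ (\bigcup_(e in [set e | A e /\ rep e = e]) chained e)).
    apply: subset_card_le => a Aa; have [Ar ar] := repP a Aa.
    by exists (rep a); [split => //; exact/esym/rep_eq | exact: chained_sym].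
  by apply: bigcup_countable => // e _; exact: chained_countable.
- by move=> a c [_ ra] [_ rc] /rep_eq; rewrite ra rc.
Qed.

End Chains.

Section Calibre.
Variables (X : topologicalType) (P : Type) (le : P -> P -> Prop) (B : X -> P -> set X).
Hypothesis X_T1 : accessible_space X.
Hypothesis B_base : P_base le B.
Hypothesis le_calibre : calibre_w1_w le.

Lemma calibre_cofinite_countable (y : X) (E : set X) :
  ~ E y -> (forall p, finite_set (E `\` B y p)) -> countable E.
Proof.
move=> Ey E_cofin; have [_ B_small B_anti] := B_base y.
have /choice[pe peP] : forall e, exists p, E e -> ~ B y p e.
  move=> e.
  have [Ee|] := pselect (E e); last by have [p _] := B_small _ filterT; exists p.
  have /B_small[p Bp] : nbhs y (~` [set e]).
    apply: open_nbhs_nbhs; split; last by move=> ye; apply: Ey; rewrite ye.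
    exact/closed_openC/accessible_closed_set1.
  by exists p => _ /Bp; apply.
apply: contrapT => E_unc.
have pe_unc : ~ countable (pe @` E).
  move=> pe_cnt; apply: E_unc.
  apply: (@sub_countable _ _ _ (\bigcup_(p in pe @` E) (E `\` B y p))).
    by apply: subset_card_le => e Ee; exists (pe e); [exists e | split => //; exact: peP].
  by apply: bigcup_countable => // p _; exact/finite_set_countable.
have [D [Dpe D_inf [u Du]]] := le_calibre pe_unc.
apply: D_inf; apply: sub_finite_set (finite_image pe (E_cofin u)).
move=> p Dp; have [e Ee pep] := Dpe p Dp; exists e => //; split => // Bue.
by apply: (peP e Ee); apply: B_anti Bue; rewrite pep; exact: Du.
Qed.

End Calibre.

Section Countability.
Variables (X : topologicalType) (W : Type) (lt : W -> W -> Prop) (wf : well_founded lt).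
Variables (P : Type) (le : P -> P -> Prop) (B : X -> P -> set X) (U : X -> set X).
Hypothesis X_T1 : accessible_space X.
Hypothesis X_compact : compact [set: X].
Hypothesis lt_total : forall a b : W, a = b \/ lt a b \/ lt b a.
Hypothesis height_ex : forall x : X, exists a, has_height lt wf x a.
Hypothesis U_clopen : forall x, clopen (U x) /\ U x x.
Hypothesis U_level : forall x a, has_height lt wf x a -> U x `&` CB_level lt wf a = [set x].
Hypothesis U_point_countable : point_countable U.
Hypothesis B_base : P_base le B.
Hypothesis le_calibre : calibre_w1_w le.

Section InductiveStep.
Variables (y : X) (b : W).
Hypothesis y_height : has_height lt wf y b.
Hypothesis lower_locally_countable :
  forall (z : X) a, has_height lt wf z a -> lt a b -> locally_countable z.

Let G := U y `\ y.

Lemma punctured_locally_countable z : G z -> locally_countable z.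
Proof.
move=> [Uyz zy]; have [a hz] := height_ex z.
apply: (lower_locally_countable hz).
exact: (U_height_lt U_level lt_total y_height Uyz zy hz).
Qed.

Lemma countable_shrinking z :
  exists O : set X, [/\ open O, countable O, O `<=` U z & G z -> O z].
Proof.
have [Gz|nGz] := pselect (G z); last by exists set0; split=> //; exact: open0.
have [N [oN Nz cN]] := punctured_locally_countable Gz.
exists (U z `&` N); split=> [|||_].
- by apply: openI => //; case: (U_clopen z) => -[].
- by apply: sub_countable cN; apply: subset_card_le => w [].
- by move=> w [].
- by split => //; case: (U_clopen z).
Qed.

Section Transversal.
Variables (V : X -> set X) (E : set X).
Hypothesis V_spec : forall z, [/\ open (V z), countable (V z), V z `<=` U z & G z -> V z z].
Hypothesis E_G : E `<=` G.
Hypothesis E_transversal : forall a c, E a -> E c -> chained V a c -> a = c.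

Lemma transversal_cofinite N : nbhs y N -> finite_set (E `\` N).
Proof.
move=> Ny; apply: compact_finite_outside_nbhs Ny _ => // z zy.
have [Uyz|nUyz] := pselect (U y z); last first.
  exists (~` U y); split => //; first by apply: closed_openC; case: (U_clopen y) => -[].
  by move=> a c /E_G[].
have [oV _ _ /(_ (conj Uyz zy)) Vz] := V_spec z.
exists (V z); split => // a c Ea Ec Vza Vzc.
have chained_z e : E e -> V z e -> chained V z e.
  move=> Ee Vze; apply: rt_step; exists e; split => //.
  by have [_ _ _ /(_ (E_G Ee))] := V_spec e.
apply: E_transversal => //.
exact: rt_trans (chained_sym (chained_z a Ea Vza)) (chained_z c Ec Vzc).
Qed.

End Transversal.

Lemma punctured_countable : countable G.
Proof.
apply: contrapT => G_unc; have [V V_spec] := choice countable_shrinking.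
have V_cnt z : countable (V z) by have [] := V_spec z.
have V_pc : point_countable V.
  move=> w; apply: sub_countable (U_point_countable w); apply: subset_card_le => z Vzw.
  by have [_ _ VU _] := V_spec z; exact: VU.
have [E [E_G E_unc E_tr]] := exists_chain_transversal V_cnt V_pc G_unc.
apply: E_unc; apply: (calibre_cofinite_countable X_T1 B_base le_calibre (y := y)).
  by move=> /E_G[_]; apply.
by move=> p; apply: (transversal_cofinite V_spec E_G E_tr); have [] := B_base y.
Qed.

Lemma locally_countable_of_lower : locally_countable y.
Proof.
have [[oUy _] Uyy] := U_clopen y; exists (U y); split => //.
apply: (@sub_countable _ _ _ (\bigcup_i bigcup2 [set y] G i)).
  rewrite bigcup2E; apply: subset_card_le => z Uyz.
  by have [->|zy] := pselect (z = y); [left | right].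
apply: bigcup_countable => // -[|[|n]] _;
  [exact: countable1 | exact: punctured_countable | exact: countable0].
Qed.

End InductiveStep.

Lemma locally_countable_everywhere (x : X) : locally_countable x.
Proof.
have [b hx] := height_ex x.
elim/(well_founded_ind wf): b x hx => b IH x hx.
by apply: locally_countable_of_lower hx _ => z a hz ltab; exact: IH ltab z hz.
Qed.

Lemma setT_countable : countable [set: X].
Proof. exact: compact_countable_of_locally_countable locally_countable_everywhere. Qed.

End Countability.

Section Metrization.
Local Open Scope ring_scope.
Variables (X : topologicalType) (C : nat -> set X).
Hypothesis X_compact : compact [set: X].
Hypothesis C_clopen : forall k, clopen (C k).
Hypothesis C_separates : forall x z : X, x <> z -> exists k, ~ (C k x <-> C k z).

Definition differ (x z : X) : pred nat := fun k => (x \in C k) != (z \in C k).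

Definition cut_dist (x z : X) : Rdefinitions.R :=
  if pselect (exists k, differ x z k) is left h then (ex_minn h).+1%:R^-1 else 0.

Lemma differC x z : differ x z = differ z x.
Proof. by apply/funext => k; rewrite /differ eq_sym. Qed.

Lemma differ_split x y z k : differ x z k -> differ x y k || differ y z k.
Proof. by rewrite /differ; case: (x \in C k) (y \in C k) (z \in C k) => [] [] []. Qed.

Lemma differ_exists x z : x <> z -> exists k, differ x z k.
Proof.
move=> /C_separates[k Ck]; exists k; apply/negP => /eqP xz; apply: Ck.
by rewrite -[C k x]in_setE xz in_setE.
Qed.

Lemma cut_dist_ge0 x z : 0 <= cut_dist x z.
Proof. by rewrite /cut_dist; case: pselect => // h; rewrite invr_ge0 ler0n. Qed.

Lemma cut_dist_lt x z n :
  cut_dist x z < n.+1%:R^-1 <-> forall k, (k <= n)%N -> ~~ differ x z k.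
Proof.
rewrite /cut_dist; case: pselect => [h|nh]; last first.
  by split=> [_ k _|_]; [apply/negP => dk; apply: nh; exists k | rewrite invr_gt0 ltr0n].
case: ex_minnP => m dm m_min; rewrite ltf_pV2 ?posrE ?ltr0n // ltr_nat ltnS.
split=> [nm k kn|agree].
  by apply/negP => /m_min; rewrite leqNgt (leq_ltn_trans kn nm).
by rewrite ltnNge; apply/negP => /agree; rewrite dm.
Qed.

Lemma cut_dist_ge x z k : differ x z k -> k.+1%:R^-1 <= cut_dist x z.
Proof.
move=> dk; rewrite /cut_dist; case: pselect => [h|[]]; last by exists k.
by case: ex_minnP => m _ /(_ k dk) mk; rewrite lef_pV2 ?posrE ?ltr0n // ler_nat.
Qed.

Lemma cut_dist_eq0 x z : cut_dist x z = 0 <-> x = z.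
Proof.
split=> [d0|<-]; last first.
  by rewrite /cut_dist; case: pselect => // h; exfalso; case: h => k; rewrite /differ eqxx.
apply: contrapT => /differ_exists[k /cut_dist_ge].
by rewrite d0 leNgt invr_gt0 ltr0n.
Qed.

Lemma cut_distC x z : cut_dist x z = cut_dist z x.
Proof. by rewrite /cut_dist differC. Qed.

Lemma cut_dist_triangle x y z : cut_dist x z <= cut_dist x y + cut_dist y z.
Proof.
rewrite {1}/cut_dist; case: pselect => [h|_]; last by rewrite addr_ge0 ?cut_dist_ge0.
case: ex_minnP => m /(differ_split y) /orP[dxy|dyz] _.
  by rewrite (le_trans (cut_dist_ge dxy)) // lerDl cut_dist_ge0.
by rewrite (le_trans (cut_dist_ge dyz)) // lerDr cut_dist_ge0.
Qed.

Lemma open_mem_eq (S : set X) (b : bool) : clopen S -> open [set z | (z \in S) = b].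
Proof.
move=> [oS cS]; case: b.
  have -> : [set z | (z \in S) = true] = S.
    by apply/seteqP; split=> z /=; [exact: set_mem | exact: mem_set].
  by [].
have -> : [set z | (z \in S) = false] = ~` S.
  apply/seteqP; split=> z /=; first by move=> zS /mem_set; rewrite zS.
  by move=> nSz; apply/negbTE/negP => /set_mem.
exact: closed_openC.
Qed.

Lemma open_differ x k b : open [set z | differ x z k = b].
Proof.
have -> : [set z | differ x z k = b] = [set z | (z \in C k) = (x \in C k) (+) b].
  apply/seteqP; split=> z /=; rewrite /differ;
  by case: (x \in C k) (z \in C k) b => [] [] [].
exact: open_mem_eq.
Qed.

Lemma nbhs_agree x n : nbhs x [set z | forall k, (k <= n)%N -> ~~ differ x z k].
Proof.
have agree_k k : nbhs x [set z | differ x z k = false].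
  by apply: open_nbhs_nbhs; split; [exact: open_differ | rewrite /= /differ eqxx].
elim: n => [|n IH].
  by apply: filterS (agree_k 0%N) => z /negbT dz k; rewrite leqn0 => /eqP ->.
apply: filterS (filterI IH (agree_k n.+1)) => z [dz /negbT dzn] k.
by rewrite leq_eqVlt => /orP[/eqP -> // | /dz].
Qed.

Lemma nbhs_cut_ball x (A : set X) :
  nbhs x A <-> exists2 e, 0 < e & [set z | cut_dist x z < e] `<=` A.
Proof.
split=> [|[e e0 ballA]]; last first.
  have n_gt := truncnS_gt e^-1; set n := Num.Def.trunc e^-1 in n_gt.
  have n_lt : n.+1%:R^-1 < e by rewrite -[ltRHS]invrK ltf_pV2 ?posrE ?invr_gt0 ?ltr0n.
  apply: filterS (nbhs_agree x n) => z /cut_dist_lt zn.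
  by apply: ballA; exact: lt_trans zn n_lt.
rewrite nbhsE => -[B [oB Bx] BA].
have /choice[kz kzP] : forall z, exists k, ~ B z -> differ x z k.
  move=> z; have [Bz|nBz] := pselect (B z); first by exists 0%N.
  have [|k dk] := @differ_exists x z; first by move=> xz; apply: nBz; rewrite -xz.
  by exists k.
pose N z := B `|` [set w | differ x w (kz z) = true].
have [|D DN] := compact_finite_open_cover X_compact (N := N).
  move=> z; split; first by apply: openU => //; exact: open_differ.
  by have [Bz|nBz] := pselect (B z); [left | right; exact: kzP].
exists (\max_(z <- D) kz z).+1%:R^-1; first by rewrite invr_gt0 ltr0n.
move=> z /cut_dist_lt agree; apply: BA.
have [z' z'D [//|dz]] := DN z.
have kz_le : (kz z' <= \max_(w <- D) kz w)%N by apply: leq_bigmax_seq.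
by move: (agree _ kz_le); rewrite dz.
Qed.

Lemma compact_clopen_separated_metrizable : metrizable X.
Proof.
exists cut_dist; split; [exact: cut_dist_ge0 | exact: cut_dist_eq0 | exact: cut_distC |
  exact: cut_dist_triangle | exact: nbhs_cut_ball].
Qed.

End Metrization.

Lemma compact_countable_clopen_separated_metrizable (X : topologicalType) (I : Type)
    (C : I -> set X) :
  compact [set: X] -> countable [set: I] -> (forall i, clopen (C i)) ->
  (forall x z : X, x <> z -> exists i, ~ (C i x <-> C i z)) -> metrizable X.
Proof.
move=> X_compact /pfcard_geP[I0|/surjfunPex[e Ie]] C_clopen C_sep.
  apply: (@compact_clopen_separated_metrizable _ (fun=> set0)) => // [k|x z /C_sep[i _]].
    exact: clopen0.
  by have : [set: I] i by []; rewrite I0.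
apply: (@compact_clopen_separated_metrizable _ (C \o e)) => // [k|x z /C_sep[i Ci]].
  exact: C_clopen.
by have : [set: I] i by []; rewrite Ie => -[k _ eki]; exists k; rewrite /= eki.
Qed.

Theorem mainTheorem14
  (X : topologicalType)
  (W : Type) (lt : W -> W -> Prop) (wf : well_founded lt)
  (P : Type) (le : P -> P -> Prop) :
  tychonoff_space X ->
  compact [set: X] ->
  scattered X ->
  (* countable scattered height: all heights lie in a countable well-order *)
  well_order lt -> countable [set: W] ->
  (forall x : X, exists a : W, has_height lt wf x a) ->
  (exists U : X -> set X,
      [/\ (forall x, clopen (U x) /\ U x x),
          (forall x a, has_height lt wf x a -> U x `&` CB_level lt wf a = [set x])
        & point_countable U]) ->
  directed le -> calibre_w1_w le -> has_P_base (X:=X) le ->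
  countable [set: X] /\ metrizable X.
Proof.
move=> [_ X_T1] X_compact _ [_ _ lt_total] _ height_ex [U [U_clopen U_level U_pc]] _
  le_calibre [B B_base].
have X_cnt : countable [set: X].
  exact: setT_countable X_T1 X_compact lt_total height_ex U_clopen U_level U_pc
    B_base le_calibre.
split => //; apply: (compact_countable_clopen_separated_metrizable (C := U)) => //.
- by move=> x; case: (U_clopen x).
- exact: U_separates (fun x => (U_clopen x).2) U_level lt_total height_ex.
Qed.
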